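(* Let $\mathcal P$ be the language with a single unary predicate symbol $P$ (and crisp equality), and let $\mathbf A$ be the subalgebra of the standard Gödel chain $[0,1]_G$ with universe $\{0,\tfrac12,\tfrac34,1\}$. Let $\langle\mathbf A,\mathbf M\rangle$ and $\langle\mathbf A,\mathbf N\rangle$ be the structures with domain $\mathbb N$ and $P_{\mathbf M}(n)=\tfrac34$, $P_{\mathbf N}(n)=\tfrac12$ for all $n$. Then every $\mathcal P$-sentence has value $1$ in $\langle\mathbf A,\mathbf M\rangle$ iff it has value $1$ in $\langle\mathbf A,\mathbf N\rangle$. Let $\mathcal K$ be the class of $\mathcal P$-structures over $\mathbf A$ whose natural expansion to $\mathcal P^{\mathbf A}$ gives value $1$ to the sentence $\overline{3/4}\to(\forall x)P(x)$. Then $\mathcal K$ is closed under isomorphisms, substructures and ultraproducts, $\langle\mathbf A,\mathbf M\rangle\in\mathcal K$, $\langle\mathbf A,\mathbf N\rangle\notin\mathcal K$, and consequently $\mathcal K$ is not axiomatized by any set of universal $\mathcal P$-sentences (sentences without truth constants).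
   Context: The standard Gödel chain $[0,1]_G$ is $[0,1]$ with $x\wedge y=\min$, $x\vee y=\max$, strong conjunction $x\& y=\min(x,y)$, implication $x\to y=1$ if $x\le y$ and $y$ otherwise, and constants $0,1$. An $\mathbf{A}$-structure $\langle \mathbf A,\mathbf M\rangle$ consists of a nonempty domain $M$ and, for each $n$-ary predicate symbol, a map $M^n\to A$; equality $\approx$ is crisp (value $1$ on equal, $0$ on distinct elements). Truth values are computed Tarski-style: connectives by the operations of $\mathbf A$, $\forall$ by infimum, $\exists$ by supremum over the domain. $\mathcal P^{\mathbf A}$ is $\mathcal P$ expanded by a truth constant $\overline a$ for each $a\in A$; the natural expansion interprets $\overline a$ as $a$. Substructures are over the same $\mathbf A$: smaller domain with predicates interpreted by restriction. A class is axiomatized by a set of sentences $\Sigma$ if it consists exactly of the structures in which all sentences of $\Sigma$ have value $1$. A universal sentence has the form $(\forall\overrightarrow x)\psi$ with $\psi$ quantifier-free. *)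

From Stdlib Require Import Reals Arith List Classical ClassicalEpsilon.
Set Implicit Arguments.

Inductive A : Type := a0 | ah | a34 | a1.

Definition aval (a : A) : R :=
  match a with a0 => 0%R | ah => (1/2)%R | a34 => (3/4)%R | a1 => 1%R end.

Definition rank (a : A) : nat :=
  match a with a0 => 0 | ah => 1 | a34 => 2 | a1 => 3 end.
Definition ale (a b : A) : bool := Nat.leb (rank a) (rank b).

Definition amin (a b : A) : A := if ale a b then a else b.
Definition amax (a b : A) : A := if ale a b then b else a.
Definition aimp (a b : A) : A := if ale a b then a1 else b.

Record structure : Type := Structure {
  dom : Type;
  dom_inh : inhabited dom;
  pred : dom -> A }.

Definition ainf {D : Type} (f : D -> A) : A :=
  if excluded_middle_informative (forall d, f d = a1) then a1
  else if excluded_middle_informative (forall d, ale a34 (f d) = true) then a34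
  else if excluded_middle_informative (forall d, ale ah (f d) = true) then ah
  else a0.
Definition asup {D : Type} (f : D -> A) : A :=
  if excluded_middle_informative (exists d, f d = a1) then a1
  else if excluded_middle_informative (exists d, ale a34 (f d) = true) then a34
  else if excluded_middle_informative (exists d, ale ah (f d) = true) then ah
  else a0.

(** FConst a is the truth constant \overline{a}; FBot/FTop are the constants 0,1
    of the language.  Formulas of the plain language P are those without FConst. *)
Inductive form : Type :=
| FPred (x : nat)
| FEq (x y : nat)
| FBot | FTop
| FConst (a : A)
| FAnd (f g : form) | FOr (f g : form) | FConj (f g : form) | FImp (f g : form)
| FAll (x : nat) (f : form) | FEx (x : nat) (f : form).

Fixpoint no_consts (f : form) : Prop :=
  match f with
  | FConst _ => False
  | FAnd f g | FOr f g | FConj f g | FImp f g => no_consts f /\ no_consts g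
  | FAll _ f | FEx _ f => no_consts f
  | _ => True
  end.

Fixpoint free_in (z : nat) (f : form) : Prop :=
  match f with
  | FPred x => z = x
  | FEq x y => z = x \/ z = y
  | FBot | FTop | FConst _ => False
  | FAnd f g | FOr f g | FConj f g | FImp f g => free_in z f \/ free_in z g
  | FAll x f | FEx x f => z <> x /\ free_in z f
  end.

Definition sentence (f : form) : Prop := forall z, ~ free_in z f.

Fixpoint qfree (f : form) : Prop :=
  match f with
  | FAll _ _ | FEx _ _ => False
  | FAnd f g | FOr f g | FConj f g | FImp f g => qfree f /\ qfree g
  | _ => True
  end.

Definition universal (f : form) : Prop :=
  exists (xs : list nat) (psi : form), qfree psi /\ f = fold_right FAll psi xs.

Definition P_sentence (f : form) : Prop := sentence f /\ no_consts f.

Definition upd {D : Type} (v : nat -> D) (x : nat) (d : D) : nat -> D :=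
  fun y => if Nat.eqb y x then d else v y.

Fixpoint eval (S : structure) (v : nat -> dom S) (f : form) : A :=
  match f with
  | FPred x => pred S (v x)
  | FEq x y => if excluded_middle_informative (v x = v y) then a1 else a0
  | FBot => a0
  | FTop => a1
  | FConst a => a
  | FAnd f g => amin (eval S v f) (eval S v g)
  | FOr f g => amax (eval S v f) (eval S v g)
  | FConj f g => amin (eval S v f) (eval S v g)
  | FImp f g => aimp (eval S v f) (eval S v g)
  | FAll x f => ainf (fun d : dom S => eval S (upd v x d) f)
  | FEx x f => asup (fun d : dom S => eval S (upd v x d) f)
  end.

Definition default (S : structure) : dom S := epsilon (dom_inh S) (fun _ => True).

(* value of a sentence (independent of the assignment) *)
Definition value (S : structure) (f : form) : A := eval S (fun _ => default S) f.

Definition strM : structure := @Structure nat (inhabits 0) (fun _ => a34).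
Definition strN : structure := @Structure nat (inhabits 0) (fun _ => ah).

Definition K_sentence : form := FImp (FConst a34) (FAll 0 (FPred 0)).
Definition inK (S : structure) : Prop := value S K_sentence = a1.

Definition iso (S T : structure) (f : dom S -> dom T) : Prop :=
  (forall x y, f x = f y -> x = y) /\ (forall y, exists x, f x = y) /\
  (forall x, pred T (f x) = pred S x).

Definition substr (S : structure) (X : dom S -> Prop) (hX : exists x, X x)
  : structure :=
  @Structure {x : dom S | X x}
    (let (x, hx) := hX in inhabits (exist _ x hx))
    (fun x => pred S (proj1_sig x)).

Definition ultrafilter {I : Type} (U : (I -> Prop) -> Prop) : Prop :=
  U (fun _ => True) /\ ~ U (fun _ => False) /\
  (forall X Y : I -> Prop, U X -> (forall i, X i -> Y i) -> U Y) /\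
  (forall X Y : I -> Prop, U X -> U Y -> U (fun i => X i /\ Y i)) /\
  (forall X : I -> Prop, U X \/ U (fun i => ~ X i)).

Section Ultraproduct.
Variables (I : Type) (S : I -> structure) (U : (I -> Prop) -> Prop).

Definition uprod_elt := forall i, dom (S i).

(* the class of x modulo x ~ y iff {i | x i = y i} in U *)
Definition uclass (x : uprod_elt) : uprod_elt -> Prop :=
  fun y => U (fun i => x i = y i).

Definition udom : Type := {c : uprod_elt -> Prop | exists x, c = uclass x}.

Definition udom_inh : inhabited udom :=
  inhabits (exist (fun c => exists x, c = uclass x)
                  (uclass (fun i => epsilon (dom_inh (S i)) (fun _ => True)))
                  (ex_intro _ _ eq_refl)).

(* P([x]) = the a in A with {i | P_i(x i) = a} in U *)
Definition upred_at (c : udom) (a : A) : Prop :=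
  exists x, uclass x = proj1_sig c /\ U (fun i => pred (S i) (x i) = a).

Definition upred (c : udom) : A :=
  if excluded_middle_informative (upred_at c a1) then a1
  else if excluded_middle_informative (upred_at c a34) then a34
  else if excluded_middle_informative (upred_at c ah) then ah
  else a0.

Definition ultraproduct : structure := @Structure udom udom_inh upred.
End Ultraproduct.

Definition axiomatizes (Sigma : form -> Prop) (K : structure -> Prop) : Prop :=
  forall S : structure, K S <-> (forall f, Sigma f -> value S f = a1).

(* Let [halve] send 3/4 to 1/2 and fix 0, 1/2 and 1.  On values different from
   1/2 it commutes with the Gödel operations, and also with infima and
   suprema, because there [a <= halve x] and [halve x <= a] are the conditions
   [raise a <= x] and [x <= lower a] for suitable order-preserving [raise] and
   [lower].  Constant-free formulas never take the value 1/2 in M, so by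
   induction their values in N are the images under [halve] of their values in
   M; as [halve] reflects 1, M and N have the same true sentences.  The class K
   consists of the structures in which every instance of P is at least 3/4, a
   condition preserved by isomorphisms, substructures and ultraproducts.  Since
   every constant-free sentence true in M is true in N, no set of such
   sentences, universal or not, axiomatizes K. *)
From Stdlib Require Import Classical ClassicalEpsilon.
Set Implicit Arguments.

Lemma ale_refl (a : A) : ale a a = true.
Proof. destruct a; reflexivity. Qed.

Lemma ale_trans (a b c : A) :
  ale a b = true -> ale b c = true -> ale a c = true.
Proof. destruct a, b, c; cbn; intros; congruence. Qed.

Lemma ale_antisym (a b : A) : ale a b = true -> ale b a = true -> a = b.
Proof. destruct a, b; cbn; intros; congruence. Qed.

Lemma ale_a1 (a : A) : ale a1 a = true -> a = a1.
Proof. destruct a; cbn; congruence. Qed.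

Lemma aimp_eq_a1 (a b : A) : aimp a b = a1 <-> ale a b = true.
Proof. destruct a, b; cbn; intuition congruence. Qed.

Lemma ale_ext_lower (x y : A) :
  (forall a, ale a x = true <-> ale a y = true) -> x = y.
Proof.
intros H; apply ale_antisym.
- apply H, ale_refl.
- apply H, ale_refl.
Qed.

Lemma ale_ext_upper (x y : A) :
  (forall a, ale x a = true <-> ale y a = true) -> x = y.
Proof.
intros H; apply ale_antisym.
- apply H, ale_refl.
- apply H, ale_refl.
Qed.

Lemma ale_ainf (D : Type) (f : D -> A) (a : A) :
  ale a (ainf f) = true <-> forall d, ale a (f d) = true.
Proof.
unfold ainf.
destruct excluded_middle_informative as [H1|H1];
  [|destruct excluded_middle_informative as [H34|H34];
  [|destruct excluded_middle_informative as [Hh|Hh]]];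
  split; intros Ha.
- intro d; rewrite H1; destruct a; reflexivity.
- destruct a; reflexivity.
- intro d; exact (ale_trans _ _ _ Ha (H34 d)).
- destruct a; try reflexivity.
  exfalso; apply H1; intro d; apply ale_a1, Ha.
- intro d; exact (ale_trans _ _ _ Ha (Hh d)).
- destruct a; try reflexivity; exfalso.
  + apply H34; exact Ha.
  + apply H34; intro d; exact (ale_trans a34 a1 _ eq_refl (Ha d)).
- intro d; destruct a; [reflexivity | discriminate ..].
- destruct a; try reflexivity; exfalso.
  + apply Hh; exact Ha.
  + apply Hh; intro d; exact (ale_trans ah a34 _ eq_refl (Ha d)).
  + apply Hh; intro d; exact (ale_trans ah a1 _ eq_refl (Ha d)).
Qed.

Lemma asup_ale (D : Type) (f : D -> A) (a : A) :
  ale (asup f) a = true <-> forall d, ale (f d) a = true.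
Proof.
unfold asup.
destruct excluded_middle_informative as [[d1 H1]|H1];
  [|destruct excluded_middle_informative as [[d34 H34]|H34];
  [|destruct excluded_middle_informative as [[dh Hh]|Hh]]];
  split; intros Ha.
- intro d; rewrite (ale_a1 _ Ha); destruct (f d); reflexivity.
- rewrite <- H1; exact (Ha d1).
- intro d; apply (ale_trans _ a34 _); [|exact Ha].
  destruct (f d) eqn:E; try reflexivity; exfalso; eauto.
- exact (ale_trans _ _ _ H34 (Ha d34)).
- intro d; apply (ale_trans _ ah _); [|exact Ha].
  destruct (f d) eqn:E; try reflexivity;
    exfalso; apply H34; exists d; rewrite E; reflexivity.
- exact (ale_trans _ _ _ Hh (Ha dh)).
- intro d; destruct (f d) eqn:E; try reflexivity;
    exfalso; apply Hh; exists d; rewrite E; reflexivity.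
- reflexivity.
Qed.

Lemma ainf_neq_ah (D : Type) (f : D -> A) :
  (forall d, f d <> ah) -> ainf f <> ah.
Proof.
intros Hf E.
assert (H34 : ale a34 (ainf f) = true).
{ apply ale_ainf; intro d.
  assert (Hd : ale ah (f d) = true) by (apply ale_ainf; rewrite E; reflexivity).
  specialize (Hf d); destruct (f d); cbn in *; congruence. }
rewrite E in H34; discriminate.
Qed.

Lemma asup_neq_ah (D : Type) (f : D -> A) :
  (forall d, f d <> ah) -> asup f <> ah.
Proof.
intros Hf E.
assert (H0 : ale (asup f) a0 = true).
{ apply asup_ale; intro d.
  assert (Hd : ale (f d) ah = true) by (apply asup_ale; rewrite E; reflexivity).
  specialize (Hf d); destruct (f d); cbn in *; congruence. }
rewrite E in H0; discriminate.
Qed.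

Definition halve (a : A) : A := match a with a34 => ah | b => b end.
Definition raise (a : A) : A := match a with ah => a34 | a34 => a1 | b => b end.
Definition lower (a : A) : A := match a with ah => a34 | b => b end.

Lemma ale_halve (a x : A) : x <> ah -> ale a (halve x) = ale (raise a) x.
Proof. destruct a, x; cbn; congruence. Qed.

Lemma halve_ale (x a : A) : x <> ah -> ale (halve x) a = ale x (lower a).
Proof. destruct a, x; cbn; congruence. Qed.

Lemma halve_eq_a1 (a : A) : halve a = a1 <-> a = a1.
Proof. destruct a; cbn; intuition congruence. Qed.

Lemma amin_halve (a b : A) : a <> ah -> b <> ah ->
  amin a b <> ah /\ amin (halve a) (halve b) = halve (amin a b).
Proof. destruct a, b; cbn; intuition congruence. Qed.

Lemma amax_halve (a b : A) : a <> ah -> b <> ah ->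
  amax a b <> ah /\ amax (halve a) (halve b) = halve (amax a b).
Proof. destruct a, b; cbn; intuition congruence. Qed.

Lemma aimp_halve (a b : A) : a <> ah -> b <> ah ->
  aimp a b <> ah /\ aimp (halve a) (halve b) = halve (aimp a b).
Proof. destruct a, b; cbn; intuition congruence. Qed.

Lemma ainf_halve (D : Type) (f g : D -> A) :
  (forall d, f d <> ah) -> (forall d, g d = halve (f d)) ->
  ainf g = halve (ainf f).
Proof.
intros Hf Hg; apply ale_ext_lower; intro a.
rewrite ale_ainf, ale_halve, ale_ainf by exact (ainf_neq_ah f Hf).
split; intros H d; specialize (H d); rewrite Hg, ale_halve in *; auto.
Qed.

Lemma asup_halve (D : Type) (f g : D -> A) :
  (forall d, f d <> ah) -> (forall d, g d = halve (f d)) ->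
  asup g = halve (asup f).
Proof.
intros Hf Hg; apply ale_ext_upper; intro a.
rewrite asup_ale, halve_ale, asup_ale by exact (asup_neq_ah f Hf).
split; intros H d; specialize (H d); rewrite Hg, halve_ale in *; auto.
Qed.

Lemma eval_strM_strN (f : form) : no_consts f -> forall v : nat -> nat,
  eval strM v f <> ah /\ eval strN v f = halve (eval strM v f).
Proof.
induction f as [x|x y| | |c|f IHf g IHg|f IHf g IHg|f IHf g IHg|f IHf g IHg
                |x f IHf|x f IHf]; cbn; intros Hc v; try contradiction.
- split; [discriminate | reflexivity].
- destruct excluded_middle_informative; split; (discriminate || reflexivity).
- split; [discriminate | reflexivity].
- split; [discriminate | reflexivity].
- destruct Hc as [Hf Hg], (IHf Hf v) as [Mf ->], (IHg Hg v) as [Mg ->].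
  exact (amin_halve Mf Mg).
- destruct Hc as [Hf Hg], (IHf Hf v) as [Mf ->], (IHg Hg v) as [Mg ->].
  exact (amax_halve Mf Mg).
- destruct Hc as [Hf Hg], (IHf Hf v) as [Mf ->], (IHg Hg v) as [Mg ->].
  exact (amin_halve Mf Mg).
- destruct Hc as [Hf Hg], (IHf Hf v) as [Mf ->], (IHg Hg v) as [Mg ->].
  exact (aimp_halve Mf Mg).
- split; [apply ainf_neq_ah | apply ainf_halve];
    intro d; apply (IHf Hc (upd v x d)).
- split; [apply asup_neq_ah | apply asup_halve];
    intro d; apply (IHf Hc (upd v x d)).
Qed.

Lemma value_strM_strN (f : form) :
  P_sentence f -> (value strM f = a1 <-> value strN f = a1).
Proof.
intros [_ Hc].
destruct (eval_strM_strN f Hc (fun _ => default strM)) as [_ E].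
unfold value; change (default strN) with (default strM).
rewrite E, halve_eq_a1; reflexivity.
Qed.

Lemma inK_iff (S : structure) :
  inK S <-> forall d, ale a34 (pred S d) = true.
Proof. unfold inK, value; cbn; rewrite aimp_eq_a1; apply ale_ainf. Qed.

Lemma inK_strM : inK strM.
Proof. apply inK_iff; reflexivity. Qed.

Lemma not_inK_strN : ~ inK strN.
Proof. rewrite inK_iff; intros H; discriminate (H 0). Qed.

Lemma inK_iso (S T : structure) (h : dom S -> dom T) :
  iso S T h -> inK S -> inK T.
Proof.
rewrite !inK_iff; intros (_ & Hsurj & Hpred) HS y.
destruct (Hsurj y) as [x <-]; rewrite Hpred; apply HS.
Qed.

Lemma inK_substr (S : structure) (X : dom S -> Prop) (hX : exists x, X x) :
  inK S -> inK (substr S X hX).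
Proof. rewrite !inK_iff; intros HS [x Hx]; apply HS. Qed.

Section Ultraproduct.
Variables (I : Type) (S : I -> structure) (U : (I -> Prop) -> Prop).

Lemma ale_upred (c : udom S U) (a : A) :
  upred_at c a -> ale a (upred c) = true.
Proof.
unfold upred; intros Ha.
repeat destruct excluded_middle_informative; destruct a;
  solve [reflexivity | contradiction].
Qed.

Hypothesis HU : ultrafilter U.

Lemma ultrafilter_inhabited (X : I -> Prop) : U X -> exists i, X i.
Proof.
destruct HU as (_ & U_False & U_mono & _).
intros HX; apply NNPP; intros Hn; apply U_False.
apply (U_mono X); [exact HX|]; intros i Xi; apply Hn; exists i; exact Xi.
Qed.

(* An ultrafilter chooses one block of the partition of I by the four values. *)
Lemma upred_at_exists (c : udom S U) : exists b, upred_at c b.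
Proof.
destruct HU as (_ & _ & _ & U_and & U_compl).
destruct c as [c [x ->]]; apply NNPP; intros Hno.
assert (Hc : forall b, U (fun i => pred (S i) (x i) <> b)).
{ intros b; destruct (U_compl (fun i => pred (S i) (x i) = b)) as [Hb|Hb].
  - exfalso; apply Hno; exists b, x; split; [reflexivity | exact Hb].
  - exact Hb. }
destruct (ultrafilter_inhabited
            (U_and _ _ (Hc a1) (U_and _ _ (Hc a34) (U_and _ _ (Hc ah) (Hc a0)))))
  as [i Hi].
destruct (pred (S i) (x i)); tauto.
Qed.

Lemma upred_lower_bound (a : A) :
  (forall i d, ale a (pred (S i) d) = true) ->
  forall c : udom S U, ale a (upred c) = true.
Proof.
intros Ha c; destruct (upred_at_exists c) as [b Hb].
apply (ale_trans a b); [|exact (ale_upred Hb)].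
destruct Hb as [x [_ Hx]]; destruct (ultrafilter_inhabited Hx) as [i <-].
apply Ha.
Qed.

End Ultraproduct.

Lemma inK_ultraproduct (I : Type) (S : I -> structure) (U : (I -> Prop) -> Prop) :
  ultrafilter U -> (forall i, inK (S i)) -> inK (ultraproduct S U).
Proof.
intros HU HS; apply inK_iff, upred_lower_bound; [exact HU|].
intros i; apply inK_iff, HS.
Qed.

Lemma strM_strN_axiomatized (Sigma : form -> Prop) (K : structure -> Prop) :
  (forall f, Sigma f -> P_sentence f) -> axiomatizes Sigma K -> K strM -> K strN.
Proof.
intros HP Hax HM; apply Hax; intros f Hf.
apply (value_strM_strN (HP f Hf)), Hax; assumption.
Qed.

Theorem mainTheorem6 :
  (forall f : form, P_sentence f -> (value strM f = a1 <-> value strN f = a1)) /\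
  (forall (S T : structure) (h : dom S -> dom T), iso S T h -> inK S -> inK T) /\
  (forall (S : structure) (X : dom S -> Prop) (hX : exists x, X x),
      inK S -> inK (substr S X hX)) /\
  (forall (I : Type) (S : I -> structure) (U : (I -> Prop) -> Prop),
      ultrafilter U -> (forall i, inK (S i)) -> inK (ultraproduct S U)) /\
  inK strM /\ ~ inK strN /\
  ~ (exists Sigma : form -> Prop,
        (forall f, Sigma f -> P_sentence f /\ universal f) /\
        axiomatizes Sigma inK).
Proof.
split; [exact value_strM_strN|].
split; [exact inK_iso|].
split; [exact inK_substr|].
split; [exact inK_ultraproduct|].
split; [exact inK_strM|].
split; [exact not_inK_strN|].
intros [Sigma [HSigma Hax]]; apply not_inK_strN.
exact (strM_strN_axiomatized (fun f Hf => proj1 (HSigma f Hf)) Hax inK_strM).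
Qed.
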